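(* Let $\mathbb{K}$ be a field, $X$ a set and $\alpha=(\{D_t\}_{t\in G},\{\alpha_t\}_{t\in G})$ a partial action of a group $G$ on the algebra $\mathcal{F}_0(X)$. Then there exists a partial action $\theta=(\{X_t\}_{t\in G},\{h_t\}_{t\in G})$ of $G$ on $X$ such that $D_t=\mathcal{F}_0(X_t)$ and $\alpha_t(f)=f\circ h_{t^{-1}}$ for all $t\in G$ and $f\in D_{t^{-1}}$ (i.e. $\alpha$ arises from $\theta$).
   Context: $\mathcal{F}_0(X)$ is the $\mathbb{K}$-algebra of finitely supported functions $X\to\mathbb{K}$ with pointwise operations, and for $A\subseteq X$, $\mathcal{F}_0(A)=\{f\in\mathcal{F}_0(X):f(x)=0\ \forall x\notin A\}$. A partial action of $G$ on a set $X$ is a pair $(\{X_t\},\{h_t\})$ with $X_t\subseteq X$, bijections $h_t:X_{t^{-1}}\to X_t$, $X_e=X$, $h_e=\mathrm{id}$, $h_t(X_{t^{-1}}\cap X_s)=X_t\cap X_{ts}$, $h_t(h_s(x))=h_{ts}(x)$ for $x\in X_{s^{-1}}\cap X_{s^{-1}t^{-1}}$. A partial action of $G$ on an algebra $A$ is a pair $(\{D_t\},\{\alpha_t\})$ with $D_t$ two-sided ideals, $\alpha_t:D_{t^{-1}}\to D_t$ algebra isomorphisms, $D_e=A$, $\alpha_e=\mathrm{id}$, $\alpha_t(D_{t^{-1}}\cap D_s)=D_t\cap D_{ts}$, $\alpha_t\alpha_s=\alpha_{ts}$ on $D_{s^{-1}}\cap D_{s^{-1}t^{-1}}$. *)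

From mathcomp Require Import all_boot all_algebra.
From Stdlib Require Import List.
Set Implicit Arguments. Unset Strict Implicit. Unset Printing Implicit Defensive.
Import GRing.Theory.
Local Open Scope ring_scope.

Definition is_group (G : Type) (mul : G -> G -> G) (inv : G -> G) (e : G) : Prop :=
  (forall a b c, mul a (mul b c) = mul (mul a b) c) /\
  (forall a, mul e a = a) /\ (forall a, mul a e = a) /\
  (forall a, mul (inv a) a = e) /\ (forall a, mul a (inv a) = e).

(* F_0(A) for A ⊆ X: finitely supported functions X -> K vanishing outside A.
   F_0(X) is F0on (fun _ => True). *)
Definition fin_supp (K : fieldType) (X : Type) (f : X -> K) : Prop :=
  exists s : list X, forall x, f x <> 0 -> List.In x s.

Definition F0on (K : fieldType) (X : Type) (A : X -> Prop) (f : X -> K) : Prop :=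
  fin_supp f /\ forall x, ~ A x -> f x = 0.

Definition F0 (K : fieldType) (X : Type) (f : X -> K) : Prop :=
  F0on (fun _ : X => True) f.

Definition fadd (K : fieldType) (X : Type) (f g : X -> K) : X -> K := fun x => f x + g x.
Definition fmul (K : fieldType) (X : Type) (f g : X -> K) : X -> K := fun x => f x * g x.
Definition fscale (K : fieldType) (X : Type) (c : K) (f : X -> K) : X -> K := fun x => c * f x.
Definition fzero (K : fieldType) (X : Type) : X -> K := fun _ => 0.

Definition is_ideal (K : fieldType) (X : Type) (D : (X -> K) -> Prop) : Prop :=
  (forall f, D f -> F0 f) /\
  D (@fzero K X) /\
  (forall f g, D f -> D g -> D (fadd f g)) /\
  (forall c f, D f -> D (fscale c f)) /\
  (forall f g, D f -> F0 g -> D (fmul g f) /\ D (fmul f g)).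

Definition alg_iso (K : fieldType) (X : Type) (D1 D2 : (X -> K) -> Prop)
    (a : (X -> K) -> (X -> K)) : Prop :=
  (forall f, D1 f -> D2 (a f)) /\
  (forall f g, D1 f -> D1 g -> a f = a g -> f = g) /\
  (forall g, D2 g -> exists f, D1 f /\ a f = g) /\
  (forall f g, D1 f -> D1 g -> a (fadd f g) = fadd (a f) (a g)) /\
  (forall f g, D1 f -> D1 g -> a (fmul f g) = fmul (a f) (a g)) /\
  (forall c f, D1 f -> a (fscale c f) = fscale c (a f)).

Definition partial_action_alg (G : Type) (mul : G -> G -> G) (inv : G -> G) (e : G)
    (K : fieldType) (X : Type)
    (D : G -> (X -> K) -> Prop) (alpha : G -> (X -> K) -> (X -> K)) : Prop :=
  (forall t, is_ideal (D t)) /\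
  (forall t, alg_iso (D (inv t)) (D t) (alpha t)) /\
  (forall f, D e f <-> F0 f) /\
  (forall f, F0 f -> alpha e f = f) /\
  (forall t s g, (D t g /\ D (mul t s) g) <->
                 (exists f, (D (inv t) f /\ D s f) /\ alpha t f = g)) /\
  (forall t s f, D (inv s) f -> D (mul (inv s) (inv t)) f ->
                 alpha t (alpha s f) = alpha (mul t s) f).

Definition partial_action_set (G : Type) (mul : G -> G -> G) (inv : G -> G) (e : G)
    (X : Type) (Xt : G -> X -> Prop) (h : G -> X -> X) : Prop :=
  (forall t x, Xt (inv t) x -> Xt t (h t x)) /\
  (forall t x y, Xt (inv t) x -> Xt (inv t) y -> h t x = h t y -> x = y) /\
  (forall t y, Xt t y -> exists x, Xt (inv t) x /\ h t x = y) /\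
  (forall x, Xt e x) /\
  (forall x, h e x = x) /\
  (forall t s y, (Xt t y /\ Xt (mul t s) y) <->
                 (exists x, (Xt (inv t) x /\ Xt s x) /\ h t x = y)) /\
  (forall t s x, Xt (inv s) x -> Xt (mul (inv s) (inv t)) x ->
                 h t (h s x) = h (mul t s) x).

From mathcomp Require Import all_boot all_algebra.
From Stdlib Require Import Classical ClassicalEpsilon FunctionalExtensionality.
Set Implicit Arguments. Unset Strict Implicit. Unset Printing Implicit Defensive.
Import GRing.Theory.
Local Open Scope ring_scope.

(* Every ideal D of F_0(X) is F_0(X_D), where X_D is the set of points whose
   Dirac function lies in D: a finitely supported function is a finite linear
   combination of Dirac functions, and multiplying an element of D by the
   Dirac function at a point of its support gives a nonzero multiple of it.
   An algebra isomorphism between two such ideals sends the Dirac function at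
   x, a nonzero idempotent that is minimal (its multiples are its scalar
   multiples), to a nonzero minimal idempotent, i.e. to the Dirac function at
   some point h(x).  The partial-action axioms for (X_t, h_t) are then read
   off from those of alpha, evaluated on Dirac functions. *)

Lemma group_invK (G : Type) (mul : G -> G -> G) (inv : G -> G) (e : G) :
  is_group mul inv e -> forall t, inv (inv t) = t.
Proof.
move=> [Hass [Hel [Her [Hil _]]]] t.
by rewrite -{1}(Her (inv (inv t))) -(Hil t) Hass Hil Hel.
Qed.

Section FinitelySupportedFunctions.

Variables (K : fieldType) (X : Type).
Implicit Types (f g : X -> K) (x y z : X).

Definition delta x : X -> K :=
  fun z => if excluded_middle_informative (z = x) then 1 else 0.

Lemma delta_id x : delta x x = 1.
Proof. by rewrite /delta; case: excluded_middle_informative. Qed.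

Lemma delta_neq x z : z <> x -> delta x z = 0.
Proof. by rewrite /delta; case: excluded_middle_informative. Qed.

Lemma delta_inj : injective delta.
Proof.
move=> x y /(congr1 (fun f => f x)); rewrite delta_id.
case: (classic (x = y)) => // nxy; rewrite delta_neq // => /eqP.
by rewrite oner_eq0.
Qed.

Lemma F0_delta x : F0 (delta x).
Proof.
split=> //; exists (x :: nil) => z /= dz; left.
by apply: NNPP => nzx; apply: dz; rewrite delta_neq // => zx; apply: nzx.
Qed.

Lemma fscale0 f : fscale 0 f = @fzero K X.
Proof. by apply: functional_extensionality => z; rewrite /fscale mul0r. Qed.

Lemma fscale1 f : fscale 1 f = f.
Proof. by apply: functional_extensionality => z; rewrite /fscale mul1r. Qed.

Lemma fscaleA (c d : K) f : fscale c (fscale d f) = fscale (c * d) f.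
Proof. by apply: functional_extensionality => z; rewrite /fscale mulrA. Qed.

Lemma fmulC f g : fmul f g = fmul g f.
Proof. by apply: functional_extensionality => z; rewrite /fmul mulrC. Qed.

Lemma fmul_delta f x : fmul f (delta x) = fscale (f x) (delta x).
Proof.
apply: functional_extensionality => z; rewrite /fmul /fscale.
by case: (classic (z = x)) => [->|nzx]; rewrite ?delta_id ?delta_neq ?mulr1 ?mulr0.
Qed.

Section Ideals.

Variable D : (X -> K) -> Prop.
Hypothesis HD : is_ideal D.

Definition ideal_support x : Prop := exists2 f, D f & f x <> 0.

Lemma ideal_supportE x : ideal_support x <-> D (delta x).
Proof.
have [_ [_ [_ [Dscale Dmul]]]] := HD.
split=> [[f Df fx] | Dx]; last first.
  by exists (delta x); rewrite // delta_id; apply/eqP; exact: oner_neq0.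
have -> : delta x = fscale (f x)^-1 (fmul f (delta x)).
  by rewrite fmul_delta fscaleA mulVf ?fscale1 //; apply/eqP.
exact/Dscale/(Dmul _ _ Df (F0_delta x)).2.
Qed.

Lemma ideal_F0onE f : D f <-> F0on ideal_support f.
Proof.
have [DF0 [D0 [Dadd [Dscale _]]]] := HD.
split=> [Df | [[s Hs] Hout]].
  split; first exact: (DF0 _ Df).1.
  by move=> x Hx; apply: NNPP => fx; apply: Hx; exists f.
elim: s f Hs Hout => [|a s IH] f Hs Hout.
  suff -> : f = @fzero K X by [].
  by apply: functional_extensionality => z; apply: NNPP => /Hs.
have Dfa : D (fscale (f a) (delta a)).
  case: (classic (f a = 0)) => [->|fa]; first by rewrite fscale0.
  by apply/Dscale/ideal_supportE; apply: NNPP => /Hout.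
pose f' z := if excluded_middle_informative (z = a) then 0 else f z.
have -> : f = fadd (fscale (f a) (delta a)) f'.
  apply: functional_extensionality => z; rewrite /fadd /fscale /f' /delta.
  case: excluded_middle_informative => [za|_] /=; first by rewrite za mulr1 addr0.
  by rewrite mulr0 add0r.
apply: Dadd Dfa (IH _ _ _) => z; rewrite /f'; clear f';
  case: (excluded_middle_informative (z = a)) => [//|nza].
- by move=> /Hs [az|//]; case: nza.
- by move=> /Hout.
Qed.

End Ideals.

Section AlgebraIsomorphisms.

Variables (D1 D2 : (X -> K) -> Prop) (a : (X -> K) -> X -> K).
Hypotheses (HD1 : is_ideal D1) (HD2 : is_ideal D2) (Ha : alg_iso D1 D2 a).

Lemma alg_iso0 : a (@fzero K X) = @fzero K X.
Proof.
have [_ [_ [_ [_ [_ Ascale]]]]] := Ha; have [_ [D10 _]] := HD1.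
by rewrite -(fscale0 (@fzero K X)) Ascale // !fscale0.
Qed.

Lemma alg_iso_delta x : D1 (delta x) -> exists2 y, D2 (delta y) & a (delta x) = delta y.
Proof.
move=> D1x; have [Amap [Ainj [Asurj [_ [Amul Ascale]]]]] := Ha.
have [_ [D10 [_ [_ D1mul]]]] := HD1.
set g := a (delta x).
have gg : fmul g g = g by rewrite -Amul // fmul_delta delta_id fscale1.
have [y gy] : exists y, g y <> 0.
  apply: NNPP => g0.
  have : delta x = @fzero K X.
    apply: Ainj => //; rewrite alg_iso0 -/g.
    by apply: functional_extensionality => z; apply: NNPP => gz; apply: g0; exists z.
  by move/(congr1 (fun f => f x)); rewrite delta_id => /eqP; rewrite oner_eq0.
have gy1 : g y = 1.
  have ggy : g y * g y = g y := congr1 (fun f => f y) gg.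
  by apply: (mulfI (x := g y)); [exact/eqP | rewrite mulr1 ggy].
have D2y : D2 (delta y) by apply/(ideal_supportE HD2); exists g => //; exact: Amap.
have [f [Df af]] := Asurj _ D2y.
have fx : f = fscale (f x) (delta x).
  rewrite -fmul_delta; apply: Ainj => //; first exact: (D1mul _ _ Df (F0_delta x)).2.
  by rewrite Amul // -/g af fmulC fmul_delta gy1 fscale1.
rewrite fx Ascale // in af.
have : f x * g y = delta y y := congr1 (fun f => f y) af.
rewrite gy1 delta_id mulr1 => fx1.
by exists y; rewrite // -af fx1 fscale1.
Qed.

End AlgebraIsomorphisms.

(* Since [delta] is injective, [point_map a x] is the unique [y] with
   [a (delta x) = delta y] whenever such a [y] exists. *)
Definition point_map (a : (X -> K) -> X -> K) x : X :=
  epsilon (inhabits x) (fun y => a (delta x) = delta y).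

Lemma point_mapE a x y : a (delta x) = delta y -> point_map a x = y.
Proof.
move=> axy; apply: delta_inj; rewrite -axy; symmetry.
exact: (epsilon_spec (inhabits x) (fun y => a (delta x) = delta y) (ex_intro _ y axy)).
Qed.

Section InducedPartialAction.

Variables (G : Type) (mul : G -> G -> G) (inv : G -> G) (e : G).
Hypothesis HG : is_group mul inv e.
Variables (D : G -> (X -> K) -> Prop) (alpha : G -> (X -> K) -> X -> K).
Hypothesis Halpha : partial_action_alg mul inv e D alpha.

Definition induced_dom t := ideal_support (D t).
Definition induced_map t := point_map (alpha t).

Local Notation Xt := induced_dom.
Local Notation h := induced_map.

Lemma pa_ideal t : is_ideal (D t).
Proof. by case: Halpha. Qed.

Lemma pa_iso t : alg_iso (D (inv t)) (D t) (alpha t).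
Proof. by case: Halpha => _ []. Qed.

Lemma induced_domE t x : Xt t x <-> D t (delta x).
Proof. exact: ideal_supportE (pa_ideal t) x. Qed.

Lemma induced_F0onE t f : D t f <-> F0on (Xt t) f.
Proof. exact: ideal_F0onE (pa_ideal t) f. Qed.

Lemma induced_dom1 x : Xt e x.
Proof. by have [_ [_ [De _]]] := Halpha; apply/induced_domE/De/F0_delta. Qed.

Lemma induced_map_delta t x :
  Xt (inv t) x -> Xt t (h t x) /\ alpha t (delta x) = delta (h t x).
Proof.
move=> /induced_domE Dx.
have [y Dy axy] := alg_iso_delta (pa_ideal _) (pa_ideal _) (pa_iso t) Dx.
have -> : h t x = y := point_mapE axy.
by split=> //; apply/induced_domE.
Qed.

Lemma induced_map_inv t y :
  Xt t y -> Xt (inv t) (h (inv t) y) /\ alpha t (delta (h (inv t) y)) = delta y.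
Proof.
move=> Hy; have [_ [_ [De [Hae [_ Hcomp]]]]] := Halpha.
have [_ [_ [_ [_ Hir]]]] := HG.
have Hy' : Xt (inv (inv t)) y by rewrite (group_invK HG).
have [Hx E] := induced_map_delta Hy'; split=> //.
have D1y : D (inv (inv t)) (delta y) by apply/induced_domE.
have Dey : D (mul (inv (inv t)) (inv t)) (delta y).
  by rewrite (group_invK HG) Hir; apply/De/F0_delta.
by rewrite -E (Hcomp _ _ _ D1y Dey) Hir (Hae _ (F0_delta y)).
Qed.

Lemma induced_map_inj t x y :
  Xt (inv t) x -> Xt (inv t) y -> h t x = h t y -> x = y.
Proof.
move=> Hx Hy Exy; have [_ [Ainj _]] := pa_iso t.
have [_ Ex] := induced_map_delta Hx; have [_ Ey] := induced_map_delta Hy.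
by apply/delta_inj/Ainj; rewrite ?Ex ?Ey ?Exy //; apply/induced_domE.
Qed.

Lemma induced_map1 x : h e x = x.
Proof. by have [_ [_ [_ [Hae _]]]] := Halpha; exact: point_mapE (Hae _ (F0_delta x)). Qed.

Lemma induced_domM t s y :
  (Xt t y /\ Xt (mul t s) y) <-> (exists x, (Xt (inv t) x /\ Xt s x) /\ h t x = y).
Proof.
have [_ [_ [_ [_ [Hdom _]]]]] := Halpha; have [_ [Ainj _]] := pa_iso t.
split=> [[Hyt /induced_domE Dts] | [x [[Hx1 /induced_domE Dx2] <-]]].
  have [Hx E] := induced_map_inv Hyt.
  have [f [[Df1 Df2] Ef]] := (Hdom t s (delta y)).1 (conj ((induced_domE t y).1 Hyt) Dts).
  have fx : f = delta (h (inv t) y).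
    by apply: Ainj; rewrite ?Ef ?E //; apply/induced_domE.
  exists (h (inv t) y); split; last exact: point_mapE.
  by split=> //; apply/induced_domE; rewrite -fx.
have [_ E] := induced_map_delta Hx1.
have Dx1 := (induced_domE _ x).1 Hx1.
have [D1 D2] :=
  (Hdom t s (delta (h t x))).2 (ex_intro _ (delta x) (conj (conj Dx1 Dx2) E)).
by split; apply/induced_domE.
Qed.

Lemma induced_mapM t s x :
  Xt (inv s) x -> Xt (mul (inv s) (inv t)) x -> h t (h s x) = h (mul t s) x.
Proof.
move=> Hx1 Hx2; have [_ [_ [_ [_ [_ Hcomp]]]]] := Halpha.
have [Hass [Hel [_ [_ Hir]]]] := HG.
have [_ Ey] := induced_map_delta Hx1.
have Hz : Xt (inv t) (h s x).
  have [_] := (induced_domM s (mul (inv s) (inv t)) (h s x)).2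
    (ex_intro _ x (conj (conj Hx1 Hx2) erefl)).
  by rewrite Hass Hir Hel.
have [_ Ez] := induced_map_delta Hz.
symmetry; apply: point_mapE.
by rewrite -Hcomp ?Ey ?Ez //; apply/induced_domE.
Qed.

Lemma induced_partial_action : partial_action_set mul inv e Xt h.
Proof.
split; [|split; [|split; [|split; [|split; [|split]]]]].
- by move=> t x /induced_map_delta [].
- exact: induced_map_inj.
- move=> t y Hy; have [Hx E] := induced_map_inv Hy.
  by exists (h (inv t) y); split; last exact: point_mapE.
- exact: induced_dom1.
- exact: induced_map1.
- exact: induced_domM.
- exact: induced_mapM.
Qed.

Lemma alpha_induced_map t f : D (inv t) f ->
  forall x, (Xt t x -> alpha t f x = f (h (inv t) x)) /\ (~ Xt t x -> alpha t f x = 0).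
Proof.
move=> Df x; have [Amap [_ [_ [_ [Amul Ascale]]]]] := pa_iso t.
split=> [Hx | nx]; last exact: ((induced_F0onE t _).1 (Amap _ Df)).2 x nx.
have [Hy E] := induced_map_inv Hx.
have Dy : D (inv t) (delta (h (inv t) x)) by apply/induced_domE.
have : alpha t (fmul f (delta (h (inv t) x))) = fmul (alpha t f) (delta x).
  by rewrite Amul // E.
rewrite !fmul_delta Ascale // E => /(congr1 (fun g => g x)).
by rewrite /fscale delta_id !mulr1.
Qed.

End InducedPartialAction.

End FinitelySupportedFunctions.

Theorem mainTheorem9 (K : fieldType) (X : Type)
    (G : Type) (mul : G -> G -> G) (inv : G -> G) (e : G)
    (HG : is_group mul inv e)
    (D : G -> (X -> K) -> Prop) (alpha : G -> (X -> K) -> (X -> K))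
    (Halpha : partial_action_alg mul inv e D alpha) :
  exists (Xt : G -> X -> Prop) (h : G -> X -> X),
    partial_action_set mul inv e Xt h /\
    (forall t f, D t f <-> F0on (Xt t) f) /\
    (forall t f, D (inv t) f ->
       forall x, (Xt t x -> alpha t f x = f (h (inv t) x)) /\
                 (~ Xt t x -> alpha t f x = 0)).
Proof.
exists (induced_dom D), (induced_map alpha); split; last split.
- exact: (induced_partial_action HG Halpha).
- exact: (induced_F0onE Halpha).
- exact: (alpha_induced_map HG Halpha).
Qed.
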